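(* Let $n$ be a positive integer and let $S\subseteq V(Q_n)$ be a set of vertices that are pairwise at distance at most $2$ in $Q_n$. Then either (a) $S\subseteq N_{Q_n}[v]$ for some $v\in V(Q_n)$, or (b) $S$ is the vertex set of a $4$-cycle (square) of $Q_n$, or (c) $S$ consists of four vertices forming one of the two partite sets (color classes of the bipartition) of some subgraph of $Q_n$ isomorphic to $Q_3$.
   Context: $Q_n$ is the $n$-dimensional hypercube: vertices are binary $n$-tuples, two being adjacent iff they differ in exactly one coordinate; distance is the graph distance (Hamming distance). $N_{Q_n}[v]$ is the closed neighborhood of $v$ (i.e., $v$ and its neighbors). *)

From mathcomp Require Import all_boot.
Set Implicit Arguments. Unset Strict Implicit. Unset Printing Implicit Defensive.

Definition vert (n : nat) := {ffun 'I_n -> bool}.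

(* Hamming distance = graph distance in Q_n. *)
Definition hdist (n : nat) (x y : vert n) : nat := #|[set i | x i != y i]|.

Definition qadj (n : nat) (x y : vert n) : bool := hdist x y == 1.

Definition closed_nbhd (n : nat) (v : vert n) : {set vert n} :=
  [set w | (w == v) || qadj v w].

Definition is_square (n : nat) (S : {set vert n}) : Prop :=
  exists a b c d : vert n,
    [/\ uniq [:: a; b; c; d],
        [&& qadj a b, qadj b c, qadj c d & qadj d a] &
        S = [set a; b; c; d]].

(* Weight parity of a vertex; the two partite sets of Q_m are the vertices
   of even and of odd weight. *)
Definition parity (m : nat) (x : vert m) : bool := odd #|[set i | x i]|.

(* S consists of four vertices forming one of the two partite sets of some
   subgraph of Q_n isomorphic to Q_3: the subgraph is the image of an
   injective adjacency-preserving map f : Q_3 -> Q_n. *)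
Definition is_Q3_half (n : nat) (S : {set vert n}) : Prop :=
  exists (f : vert 3 -> vert n) (b : bool),
    [/\ injective f,
        (forall x y : vert 3, qadj x y -> qadj (f x) (f y)),
        #|S| = 4 &
        S = f @: [set x : vert 3 | parity x == b]].

(* Translating by a vertex x0 of S identifies Q_n with the subsets of 'I_n under symmetric
   difference, with x0 mapped to the empty set; S becomes a family F of sets of size at most 2
   whose pairwise symmetric differences also have size at most 2.  If neither the empty set nor
   a singleton is within distance 1 of every member of F, then F contains a pair {a, b}, a
   nonempty set avoiding a and one avoiding b.  Since no symmetric difference contains three
   points, these two sets are R ∪ {b} and R ∪ {a} for one R with |R| <= 1, so
   F = {∅, R ∪ {a}, {a, b}, R ∪ {b}}: a square if R = ∅, and the even half of the 3-cube on the
   coordinates a, b, c if R = {c}. *)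

From mathcomp Require Import all_boot zify.
Set Implicit Arguments. Unset Strict Implicit. Unset Printing Implicit Defensive.

Section SymmetricDifference.
Variable T : finType.
Implicit Types (A B : {set T}) (a : T).

Definition symd A B : {set T} := [set x | (x \in A) != (x \in B)].

Lemma symd0 A : symd set0 A = A.
Proof. by apply/setP => x; rewrite !inE; case: (x \in A). Qed.

Lemma symdC A B : symd A B = symd B A.
Proof. by apply/setP => x; rewrite !inE eq_sym. Qed.

Lemma card_symd1 a A :
  #|symd [set a] A| = if a \in A then #|A|.-1 else #|A|.+1.
Proof.
case: ifPn => aA.
  have -> : symd [set a] A = A :\ a.
    by apply/setP => x; rewrite !inE; have [->|xa] := eqVneq x a;
      rewrite ?eqxx ?aA //; case: (x \in A).
  by rewrite [#|A|](cardsD1 a) aA.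
have -> : symd [set a] A = a |: A.
  by apply/setP => x; rewrite !inE; have [->|xa] := eqVneq x a;
    rewrite ?eqxx ?(negbTE aA) //; case: (x \in A).
by rewrite cardsU1 aA.
Qed.

End SymmetricDifference.

Lemma imset_symd (aT T : finType) (f : aT -> T) (A B : {set aT}) :
  injective f -> f @: symd A B = symd (f @: A) (f @: B).
Proof.
move=> f_inj; apply/setP => x; rewrite [in RHS]inE.
case: (pickP (fun y => f y == x)) => [y /eqP <- | notf].
  by rewrite !mem_imset // inE.
have notin (C : {set aT}) : x \notin f @: C.
  by apply/imsetP => -[y _ xfy]; have := notf y; rewrite /= -xfy eqxx.
by rewrite !(negbTE (notin _)).
Qed.

Section Shift.
Variable n : nat.
Implicit Types (x y : vert n) (A B : {set 'I_n}).

Definition hdiff x y : {set 'I_n} := [set i | x i != y i].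

Definition shift x A : vert n := [ffun i => x i (+) (i \in A)].

Lemma shiftK x : cancel (shift x) (hdiff x).
Proof. by move=> A; apply/setP => i; rewrite !inE ffunE; case: (x i); case: (i \in A). Qed.

Lemma hdiffK x : cancel (hdiff x) (shift x).
Proof. by move=> y; apply/ffunP => i; rewrite ffunE inE; case: (x i); case: (y i). Qed.

Lemma shift_inj x : injective (shift x).
Proof. exact: can_inj (shiftK x). Qed.

Lemma hdist_shift x A B : hdist (shift x A) (shift x B) = #|symd A B|.
Proof.
apply: eq_card => i; rewrite !inE !ffunE.
by case: (x i); case: (i \in A); case: (i \in B).
Qed.

Lemma hdist_eq0 x y : (hdist x y == 0) = (x == y).
Proof.
rewrite cards_eq0; apply/eqP/eqP => [/setP xy | ->]; last by apply/setP => i; rewrite !inE eqxx.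
by apply/ffunP => i; have := xy i; rewrite !inE => /negbFE/eqP.
Qed.

Lemma in_closed_nbhd x y : (y \in closed_nbhd x) = (hdist x y <= 1).
Proof. by rewrite inE /qadj leq_eqVlt ltnS leqn0 hdist_eq0 eq_sym orbC. Qed.

End Shift.

Section Families.
Variables (T : finType) (F : {set {set T}}).
Hypotheses (F0 : set0 \in F) (Fd : {in F &, forall A B, #|symd A B| <= 2}).

Lemma diam2_card_le2 A : A \in F -> #|A| <= 2.
Proof. by move=> AF; rewrite -(symd0 A) Fd. Qed.

Lemma diam2_no_three_in_symd A B x y z : A \in F -> B \in F ->
  [/\ x \in symd A B, y \in symd A B & z \in symd A B] -> [/\ x != y, y != z & z != x] ->
  False.
Proof.
move=> AF BF xyz_in xyz_neq; suff: 2 < #|symd A B| by rewrite ltnNge Fd.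
by apply/card_gt2P; exists x, y, z.
Qed.

Lemma diam2_center_set1 a : {in F, forall A, A != set0 -> a \in A} ->
  {in F, forall A, #|symd [set a] A| <= 1}.
Proof.
move=> star A AF; rewrite card_symd1.
have [-> | /(star A AF) ->] := eqVneq A set0; first by rewrite in_set0 cards0.
by have := diam2_card_le2 AF; lia.
Qed.

Lemma diam2_setD1_sub a b B B' : B \in F -> B' \in F ->
  a \notin B -> b \in B -> b \notin B' -> a \in B' -> B :\ b \subset B' :\ a.
Proof.
move=> BF B'F aB bB bB' aB'; apply/subsetP => x; rewrite !inE => /andP[xb xB].
have xa : x != a by apply: contraNneq aB => <-.
have ba : b != a by apply: contraNneq aB => <-.
rewrite xa /=; apply/negPn/negP => xB'.
apply: (diam2_no_three_in_symd BF B'F (x := x) (y := b) (z := a)); last by split; rewrite // eq_sym.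
by rewrite !inE xB (negbTE xB') bB (negbTE bB') (negbTE aB) aB'.
Qed.

Lemma diam2_setD1_eq a b B B' : B \in F -> B' \in F ->
  a \notin B -> b \in B -> b \notin B' -> a \in B' -> B :\ b = B' :\ a.
Proof.
by move=> BF B'F aB bB bB' aB'; apply/eqP; rewrite eqEsubset !diam2_setD1_sub.
Qed.

Section Pair.
Variables a b : T.
Hypotheses (ab : a != b) (PF : [set a; b] \in F).

Lemma diam2_eq0_of_pair_free D : D \in F -> a \notin D -> b \notin D -> D = set0.
Proof.
move=> DF aD bD; apply/setP => x; rewrite inE; apply/negP => xD.
have xa : x != a by apply: contraNneq aD => <-.
have xb : x != b by apply: contraNneq bD => <-.
apply: (diam2_no_three_in_symd DF PF (x := x) (y := a) (z := b)); last by split; rewrite // eq_sym.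
by rewrite !inE xD (negbTE aD) (negbTE bD) (negbTE xa) (negbTE xb) !eqxx orbT.
Qed.

Lemma diam2_eq_of_pair B B' : B \in F -> B' \in F ->
    a \notin B -> b \in B -> b \notin B' -> a \in B' ->
  F = [set set0; a |: (B :\ b); [set a; b]; b |: (B :\ b)].
Proof.
move=> BF B'F aB bB bB' aB'; have RB' := diam2_setD1_eq BF B'F aB bB bB' aB'.
apply/setP => D; rewrite !inE -!orbA.
apply/idP/idP => [DF | ]; last first.
  case/or4P => /eqP ->; rewrite ?setD1K //.
  by rewrite RB' setD1K.
have [aD | aD] := boolP (a \in D); have [bD | bD] := boolP (b \in D).
- suff -> : D = [set a; b] by rewrite eqxx !(orbT, orTb).
  apply/eqP; rewrite eq_sym eqEcard cards2 ab (diam2_card_le2 DF) andbT.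
  by apply/subsetP => x; rewrite !inE => /orP[] /eqP ->.
- by rewrite (diam2_setD1_eq BF DF aB bB bD aD) setD1K // eqxx orbT.
- by rewrite RB' -(diam2_setD1_eq DF B'F aD bD bB' aB') setD1K // eqxx !orbT.
- by rewrite (diam2_eq0_of_pair_free DF) ?eqxx.
Qed.

End Pair.

Theorem diam2_family_classification :
  (exists C, {in F, forall A, #|symd C A| <= 1}) \/
  (exists a b, a != b /\ F = [set set0; [set a]; [set a; b]; [set b]]) \/
  (exists a b c, [/\ a != b, a != c, b != c &
                     F = [set set0; [set a; c]; [set a; b]; [set b; c]]]).
Proof.
case: (pickP [pred P in F | 1 < #|P|]) => [P /andP[PF P2] | small]; last first.
  by left; exists set0 => A AF; rewrite symd0 leqNgt; have := small A; rewrite /= AF => /negbT.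
have /cards2P[a [b [ab defP]]] : #|P| == 2 by rewrite eqn_leq diam2_card_le2.
rewrite {P P2}defP in PF.
case: (pickP [pred B in F | (B != set0) && (a \notin B)])
  => [B /and3P[BF B0 aB] | starA]; last first.
  left; exists [set a]; apply: diam2_center_set1 => A AF A0.
  by have := starA A; rewrite /= AF A0 /= => /negbFE.
case: (pickP [pred B in F | (B != set0) && (b \notin B)])
  => [B' /and3P[B'F B'0 bB'] | starB]; last first.
  left; exists [set b]; apply: diam2_center_set1 => A AF A0.
  by have := starB A; rewrite /= AF A0 /= => /negbFE.
have bB : b \in B by apply: contraNT B0 => /(diam2_eq0_of_pair_free ab PF BF aB)/eqP.
have aB' : a \in B' by apply: contraNT B'0 => /(diam2_eq0_of_pair_free ab PF B'F)/(_ bB')/eqP.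
rewrite (diam2_eq_of_pair ab PF BF B'F aB bB bB' aB').
have aR : a \notin B :\ b by rewrite inE negb_and aB orbT.
have bR : b \notin B :\ b by rewrite !inE eqxx.
have : #|B :\ b| <= 1 by have := diam2_card_le2 BF; rewrite (cardsD1 b) bB.
rewrite leq_eqVlt ltnS leqn0 => /orP[/cards1P[c Rc] | /eqP/cards0_eq ->].
  right; right; exists a, b, c; rewrite Rc !inE in aR bR *; split => //.
by right; left; exists a, b; rewrite !setU0.
Qed.

End Families.

Lemma card_set4 (T : finType) (p q r s : T) :
  uniq [:: p; q; r; s] -> #|[set p; q; r; s]| = 4.
Proof.
move=> /card_uniqP s_uniq; rewrite -[4]/(size [:: p; q; r; s]) -s_uniq.
by apply: eq_card => x; rewrite !inE !orbA.
Qed.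

Lemma uniq_quad (T : finType) (a b : T) (R : {set T}) :
  a != b -> a \notin R -> b \notin R -> uniq [:: set0; a |: R; [set a; b]; b |: R].
Proof.
move=> ab aR bR; apply: (@map_uniq _ _ (fun A : {set T} => (a \in A, b \in A))).
by rewrite /= !inE !eqxx (negbTE aR) (negbTE bR) (eq_sym b a) (negbTE ab).
Qed.

Lemma parity_shift1 m (y : vert m) i : parity (shift y [set i]) = ~~ parity y.
Proof.
rewrite /parity; have -> : [set k | shift y [set i] k] = symd [set i] [set k | y k].
  by apply/setP => k; rewrite !inE ffunE !inE; case: (y k); case: (k == i).
rewrite card_symd1; case: ifPn => [iy | _] /=; last by [].
by rewrite (cardsD1 i [set k | y k]) iy /= negbK.
Qed.

Lemma card_parity_class m b : 0 < m ->
  #|[set y : vert m | parity y == b]| = 2 ^ m.-1.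
Proof.
move=> m_gt0; pose E c := [set y : vert m | parity y == c]; rewrite -/(E b).
pose t y := shift y [set Ordinal m_gt0].
have tK : involutive t.
  by move=> y; apply/ffunP => k; rewrite !ffunE; case: (y k); case: (_ \in _).
have E_compl c : ~: E c = E (~~ c).
  by apply/setP => y; rewrite !inE; case: c; case: (parity y).
have t_E c : t @: E c = E (~~ c).
  rewrite (can2_imset_pre _ tK tK); apply/setP => y.
  by rewrite !inE parity_shift1; case: c; case: (parity y).
have := cardsC (E b); rewrite E_compl -t_E card_imset; last exact: can_inj tK.
have : 2 ^ m = 2 * 2 ^ m.-1 by rewrite -expnS prednK.
rewrite card_ffun card_bool card_ord; lia.
Qed.

Lemma square_shift n (x0 : vert n) (a b : 'I_n) : a != b ->
  is_square (shift x0 @: [set set0; [set a]; [set a; b]; [set b]]).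
Proof.
move=> ab; exists (shift x0 set0), (shift x0 [set a]), (shift x0 [set a; b]), (shift x0 [set b]).
split; last by rewrite !imsetU !imset_set1.
  have := uniq_quad ab (negbT (in_set0 a)) (negbT (in_set0 b)).
  by rewrite -(map_inj_uniq (@shift_inj _ x0)) !setU0.
rewrite /qadj !hdist_shift symd0 (symdC [set a; b]) (symdC _ set0) symd0.
by rewrite !card_symd1 !inE !eqxx orbT cards2 ab !cards1.
Qed.

Lemma Q3_half_shift n (x0 : vert n) (a b c : 'I_n) : a != b -> a != c -> b != c ->
  is_Q3_half (shift x0 @: [set set0; [set a; c]; [set a; b]; [set b; c]]).
Proof.
move=> ab ac bc; set S := shift x0 @: _.
pose phi (k : 'I_3) := nth a [:: a; b; c] k.
have phi_inj : injective phi.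
  move=> k l /eqP; rewrite nth_uniq ?(ltn_ord k) ?(ltn_ord l) // => [/eqP/val_inj //|].
  by rewrite /= !inE negb_or ab ac bc.
pose f (y : vert 3) := shift x0 (phi @: [set k | y k]).
have f_iso y z : hdist (f y) (f z) = hdist y z.
  by rewrite hdist_shift -imset_symd // card_imset //; apply: eq_card => k; rewrite !inE.
have f_inj : injective f by move=> y z /eqP; rewrite -hdist_eq0 f_iso hdist_eq0 => /eqP.
have f_even (X : {set 'I_3}) :
    ~~ odd #|X| -> shift x0 (phi @: X) \in f @: [set y | parity y == false].
  move=> X_even; have suppX : [set k | [ffun k => k \in X] k] = X.
    by apply/setP => k; rewrite !inE ffunE.
  by apply/imsetP; exists [ffun k => k \in X]; rewrite ?inE /parity /f suppX ?eqbF_neg.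
have S4 : #|S| = 4.
  rewrite card_imset; last exact: shift_inj.
  by apply: card_set4; apply: uniq_quad; rewrite ?inE.
exists f, false; split => //; first by move=> y z; rewrite /qadj f_iso.
(* [S] has 4 elements and lies in the image of the even half of [Q_3], which has only 4. *)
apply/eqP; rewrite eqEcard S4 (leq_trans (leq_imset_card _ _)) ?card_parity_class // andbT.
apply/subsetP => _ /imsetP[A AS ->]; rewrite !inE -!orbA in AS.
case/or4P: AS => /eqP ->.
- by rewrite -(imset0 phi); apply: f_even; rewrite cards0.
- have -> : [set a; c] = phi @: [set ord0; ord_max] by rewrite imsetU1 imset_set1.
  by apply: f_even; rewrite cards2.
- have -> : [set a; b] = phi @: [set ord0; @Ordinal 3 1 isT] by rewrite imsetU1 imset_set1.
  by apply: f_even; rewrite cards2.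
- have -> : [set b; c] = phi @: [set @Ordinal 3 1 isT; ord_max] by rewrite imsetU1 imset_set1.
  by apply: f_even; rewrite cards2.
Qed.

Theorem proposition6p4 (n : nat) (S : {set vert n}) :
  0 < n ->
  (forall x y, x \in S -> y \in S -> hdist x y <= 2) ->
  (exists v : vert n, S \subset closed_nbhd v) \/ is_square S \/ is_Q3_half S.
Proof.
move=> _ S_diam; have [-> | [x0 x0S]] := set_0Vmem S.
  by left; exists [ffun=> false]; rewrite sub0set.
pose F := hdiff x0 @: S.
have S_shift : S = shift x0 @: F by rewrite -imset_comp (eq_imset _ (hdiffK x0)) imset_id.
have F0 : set0 \in F by apply/imsetP; exists x0 => //; apply/setP => i; rewrite !inE eqxx.
have F_diam : {in F &, forall A B, #|symd A B| <= 2}.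
  by move=> _ _ /imsetP[y yS ->] /imsetP[z zS ->]; rewrite -(hdist_shift x0) !hdiffK S_diam.
rewrite S_shift; case: (diam2_family_classification F0 F_diam).
- move=> [C F_C]; left; exists (shift x0 C); apply/subsetP => _ /imsetP[A AF ->].
  by rewrite in_closed_nbhd hdist_shift F_C.
- by move=> [[a [b [ab ->]]] | [a [b [c [ab ac bc ->]]]]]; right;
    [left; apply: square_shift | right; apply: Q3_half_shift].
Qed.
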